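(* Consider the following discrete-time individual-based colonisation model. There are $N$ individuals and time-steps $t\in\{0,1,\dots,T\}$ of length $\Delta>0$. Let $\bm{X}=(x_{t,j})$, $t\in\{0,\dots,T\}$, $j\in\{1,\dots,N\}$, with $x_{t,j}\in\{0,1\}$ ($1$ = colonised, $0$ = uncolonised), and write $\bm{x}_{t}=(x_{t,1},\dots,x_{t,N})$. Fix parameters $\bm{\theta}$, a known de-colonisation rate $\gamma>0$, an initial colonisation probability $p_0\in(0,1)$, and colonisation pressures $\lambda_j(t,\bm{x}_{t-1},\bm{\theta})>0$. The prior (transmission) model is: independently for each $j$, $x_{0,j}\sim\mathrm{Bernoulli}(p_0)$, and recursively for $t\ge 1$, $x_{t,j}\mid \bm{\theta},\bm{x}_{t-1}\sim \mathrm{Bernoulli}(1-e^{-\lambda_j(t,\bm{x}_{t-1},\bm{\theta})\Delta})$ if $x_{t-1,j}=0$ and $\sim\mathrm{Bernoulli}(e^{-\gamma\Delta})$ if $x_{t-1,j}=1$; denote its probability mass function by $\pi(\bm{X}\mid\bm{\theta})$. Observations $\bm{Y}=(y_{t,j})$ are given, for the tested pairs $(t,j)$, by independent $y_{t,j}\mid x_{t,j}\sim \mathrm{Bernoulli}(s_e)$ if $x_{t,j}=1$ and $\sim\mathrm{Bernoulli}(1-s_p)$ if $x_{t,j}=0$, with known $s_e,s_p\in[0,1]$; denote the likelihood by $\pi(\bm{Y}\mid\bm{X},\bm{\theta})$, and let $\pi(\bm{X}\mid\bm{\theta},\bm{Y})\propto \pi(\bm{Y}\mid\bm{X},\bm{\theta})\pi(\bm{X}\mid\bm{\theta})$.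 Let $p_{CU}=1-e^{-\gamma\Delta}$. For a matrix $\bm{U}=(u_{t,j})\in(0,1)^{(T+1)\times N}$ define the deterministic map $\bm{X}=f(\bm{U},\bm{\theta})$ by: $x_{0,j}=1$ iff $u_{0,j}<p_0$; and for $t=1,\dots,T$ (in increasing order), if $x_{t-1,j}=0$ then $x_{t,j}=1$ iff $u_{t,j}<1-e^{-\lambda_j(t,\bm{x}_{t-1},\bm{\theta})\Delta}$, while if $x_{t-1,j}=1$ then $x_{t,j}=0$ iff $u_{t,j}<p_{CU}$. For a state $\bm{X}$ define bounds $(a_{t,j},b_{t,j})$ by: $(0,p_0)$ if $x_{0,j}=1$ and $(p_0,1)$ if $x_{0,j}=0$ (for $t=0$); and for $t\ge1$, with $p_{UC}=1-e^{-\lambda_j(t,\bm{x}_{t-1},\bm{\theta})\Delta}$: $(0,p_{UC})$ if $(x_{t-1,j},x_{t,j})=(0,1)$, $(p_{UC},1)$ if $(0,0)$, $(0,p_{CU})$ if $(1,0)$, $(p_{CU},1)$ if $(1,1)$. The latent-variable proposal from the current state $\bm{X}$ is: (Step 1) sample $\bm{U}$ with independent entries $u_{t,j}\sim\mathrm{Unif}(a_{t,j},b_{t,j})$, bounds computed from $\bm{X}$; denote this density by $q(\bm{U}\mid\bm{\theta},\bm{X})$. (Step 2) choose one pair $(t',j')$ with probability $(1+a_{t',j'}-b_{t',j'})/\sum_{t=0}^T\sum_{j=1}^N(1+a_{t,j}-b_{t,j})$, sample $u^\ast_{t',j'}\sim\mathrm{Unif}\big((0,1)\setminus(a_{t',j'},b_{t',j'})\big)$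 and set $u^\ast_{t,j}=u_{t,j}$ for all other $(t,j)$; denote the density of this step by $q(\bm{U}^\ast\mid\bm{\theta},\bm{U})$ (bounds computed from $f(\bm{U},\bm{\theta})$). (Step 3) set $\bm{X}^\ast=f(\bm{U}^\ast,\bm{\theta})$; denote by $q(\bm{X}^\ast\mid\bm{\theta},\bm{U}^\ast)$ the (degenerate) distribution of this step, equal to $1$ if $\bm{X}^\ast=f(\bm{U}^\ast,\bm{\theta})$ and $0$ otherwise. The reverse move uses the same three steps from $\bm{X}^\ast$, i.e. the densities $q(\bm{U}^\ast\mid\bm{\theta},\bm{X}^\ast)$, $q(\bm{U}\mid\bm{\theta},\bm{U}^\ast)$, $q(\bm{X}\mid\bm{\theta},\bm{U})$. Then the Metropolis–Hastings acceptance probability of $\bm{X}^\ast$, \[ \alpha(\bm{X},\bm{X}^\ast)=\min\left\{1,\frac{\pi(\bm{X}^\ast\mid\bm{\theta},\bm{Y})}{\pi(\bm{X}\mid\bm{\theta},\bm{Y})}\cdot\frac{q(\bm{U}^\ast\mid\bm{\theta},\bm{X}^\ast)\,q(\bm{U}\mid\bm{\theta},\bm{U}^\ast)\,q(\bm{X}\mid\bm{\theta},\bm{U})}{q(\bm{U}\mid\bm{\theta},\bm{X})\,q(\bm{U}^\ast\mid\bm{\theta},\bm{U})\,q(\bm{X}^\ast\mid\bm{\theta},\bm{U}^\ast)}\right\}, \] simplifies to \[ \alpha(\bm{X},\bm{X}^\ast)=\min\left\{1,\frac{\pi(\bm{Y}\mid\bm{X}^\ast,\bm{\theta})}{\pi(\bm{Y}\mid\bm{X},\bm{\theta})}\cdot\frac{q(\bm{U}\mid\bm{\theta},\bm{U}^\ast)}{q(\bm{U}^\ast\mid\bm{\theta},\bm{U})}\right\}.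 \]
   Context: This is the latent-variable update (''Rippler'' algorithm) within a Metropolis-within-Gibbs sampler targeting $\pi(\bm{\theta},\bm{X}\mid\bm{Y})$; the parameters $\bm{\theta}$ are held fixed during this update. The acceptance probability $\alpha(\bm{X},\bm{X}^\ast)$ is the usual Metropolis–Hastings ratio $\min\{1,\pi(\bm{X}^\ast\mid\bm{\theta},\bm{Y})q(\bm{X}\mid\bm{\theta},\bm{X}^\ast)/(\pi(\bm{X}\mid\bm{\theta},\bm{Y})q(\bm{X}^\ast\mid\bm{\theta},\bm{X}))\}$, where the forward proposal density is taken to be the product of the three step densities $q(\bm{U}\mid\bm{\theta},\bm{X})q(\bm{U}^\ast\mid\bm{\theta},\bm{U})q(\bm{X}^\ast\mid\bm{\theta},\bm{U}^\ast)$ and the reverse proposal density is $q(\bm{U}^\ast\mid\bm{\theta},\bm{X}^\ast)q(\bm{U}\mid\bm{\theta},\bm{U}^\ast)q(\bm{X}\mid\bm{\theta},\bm{U})$. *)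

From HB Require Import structures.
From mathcomp Require Import all_boot all_order all_algebra.
From mathcomp Require Import reals.
From mathcomp Require Import sequences exp.
Set Implicit Arguments. Unset Strict Implicit. Unset Printing Implicit Defensive.
Import Order.TTheory GRing.Theory Num.Theory.
Local Open Scope ring_scope.

Record model (R : realType) (Theta : Type) (T N : nat) := Model {
  Delta : R;
  gamma : R;
  p0 : R;
  lam : 'I_N -> nat -> 'rV[bool]_N -> Theta -> R;
  se : R;
  sp : R
}.

Section Defs.
Variables (R : realType) (Theta : Type) (T N : nat).
Implicit Types (M : model R Theta T N) (X : 'M[bool]_(T.+1, N)) (U : 'M[R]_(T.+1, N)).

Definition bern (p : R) (b : bool) : R := if b then p else 1 - p.

Definition pCU M : R := 1 - expR (- (gamma M * Delta M)).
Definition pUC M (theta : Theta) (j : 'I_N) (t : nat) (xprev : 'rV[bool]_N) : R :=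
  1 - expR (- (lam M j t xprev theta * Delta M)).

Definition prevrow X (t : 'I_T.+1) : 'rV[bool]_N := row (inord t.-1) X.

Definition prior M theta X : R :=
  \prod_(t < T.+1) \prod_(j < N)
    (if t == 0 :> nat then bern (p0 M) (X t j)
     else if prevrow X t 0 j then bern (expR (- (gamma M * Delta M))) (X t j)
     else bern (pUC M theta j t (prevrow X t)) (X t j)).

Definition obs M (x y : bool) : R := if x then bern (se M) y else bern (1 - sp M) y.

Definition lik M (tested : 'I_T.+1 -> 'I_N -> bool) (Y : 'M[bool]_(T.+1, N)) X : R :=
  \prod_(t < T.+1) \prod_(j < N | tested t j) obs M (X t j) (Y t j).

Definition post M theta tested Y X : R :=
  lik M tested Y X * prior M theta X /
  \sum_(X' : 'M[bool]_(T.+1, N)) (lik M tested Y X' * prior M theta X').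

Fixpoint fstate M theta U (t : nat) : 'rV[bool]_N :=
  match t with
  | 0 => \row_j (U (inord 0) j < p0 M)
  | t'.+1 => let xp := fstate M theta U t' in
      \row_j (if xp 0 j then ~~ (U (inord t'.+1) j < pCU M)
              else U (inord t'.+1) j < pUC M theta j t'.+1 xp)
  end.

Definition fmap M theta U : 'M[bool]_(T.+1, N) :=
  \matrix_(t < T.+1, j < N) fstate M theta U t 0 j.

Definition bounds M theta X (t : 'I_T.+1) (j : 'I_N) : R * R :=
  if t == 0 :> nat then (if X t j then (0, p0 M) else (p0 M, 1))
  else let xp := prevrow X t in
    if xp 0 j then (if X t j then (pCU M, 1) else (0, pCU M))
    else let p := pUC M theta j t xp in
      if X t j then (0, p) else (p, 1).

(* Step 1 density q(U | theta, X): independent Unif(a,b) (version of the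
   density with indicator of [a,b)) *)
Definition q1 M theta U X : R :=
  \prod_(t < T.+1) \prod_(j < N)
    (let ab := bounds M theta X t j in
     if (ab.1 <= U t j < ab.2) then (ab.2 - ab.1)^-1 else 0).

(* Step 2 density q(Us | theta, U), w.r.t. the measure
   sum over (t,j) of (Lebesgue in coordinate (t,j)) x (Dirac at U elsewhere);
   bounds computed from f(U, theta). *)
Definition q2 M theta (Us U : 'M[R]_(T.+1, N)) : R :=
  let X := fmap M theta U in
  let S := \sum_(t < T.+1) \sum_(j < N)
             (1 + (bounds M theta X t j).1 - (bounds M theta X t j).2) in
  \sum_(t < T.+1) \sum_(j < N)
    (let ab := bounds M theta X t j in
     if [&& [forall t2 : 'I_T.+1, forall j2 : 'I_N,
               ((t2, j2) != (t, j)) ==> (Us t2 j2 == U t2 j2)],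
            (0 < Us t j < 1) & ~~ (ab.1 < Us t j < ab.2)]
     then ((1 + ab.1 - ab.2) / S) * (1 - (ab.2 - ab.1))^-1
     else 0).

Definition q3 M theta (Xs : 'M[bool]_(T.+1, N)) (Us : 'M[R]_(T.+1, N)) : R :=
  if Xs == fmap M theta Us then 1 else 0.

End Defs.

From HB Require Import structures.
From mathcomp Require Import all_boot all_order all_algebra.
From mathcomp Require Import reals.
From mathcomp Require Import sequences exp.
From mathcomp Require Import ring lra.
Set Implicit Arguments. Unset Strict Implicit. Unset Printing Implicit Defensive.
Import Order.TTheory GRing.Theory Num.Theory.
Local Open Scope ring_scope.

(* The bounds (a, b) of a cell of X are chosen so that b - a is exactly the
   prior transition probability of that cell.  Hence the Step-1 density is
   the constant 1 / prior(X) on its support, and a U in that support lies in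
   the box of X, so that f(U) = X.  Step 2 keeps the proposed U' inside
   [0, 1), so U' lies in the box of the proposed state X' = f(U') as well.
   The two Step-1 densities therefore cancel the prior ratio in the posterior
   ratio (whose normalising constant cancels too), and both Step-3 factors
   equal 1. *)

Lemma onem_expRN_gt0_lt1 (R : realType) (x : R) :
  0 < x -> 0 < 1 - expR (- x) < 1.
Proof.
move=> x_gt0; have e_gt0 := expR_gt0 (- x).
have e_lt1 : expR (- x) < 1 by rewrite expR_lt1 oppr_lt0.
by apply/andP; split; lra.
Qed.

Section Rippler.
Variables (R : realType) (Theta : Type) (T N : nat).
Variables (M : model R Theta T N) (theta : Theta).
Implicit Types (X : 'M[bool]_(T.+1, N)) (U : 'M[R]_(T.+1, N)).

Definition within_bounds X U : Prop :=
  forall t j, (bounds M theta X t j).1 <= U t j < (bounds M theta X t j).2.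

Definition fcell (t : 'I_T.+1) (xp : 'rV[bool]_N) (j : 'I_N) (u : R) : bool :=
  if t == 0 :> nat then u < p0 M
  else if xp 0 j then ~~ (u < pCU M)
  else u < pUC M theta j t xp.

Lemma prevrow_fmap U (t : 'I_T.+1) :
  prevrow (fmap M theta U) t = fstate M theta U t.-1.
Proof.
have lt_pred : (t.-1 < T.+1)%N := leq_ltn_trans (leq_pred t) (ltn_ord t).
by apply/rowP => k; rewrite !mxE inordK.
Qed.

Lemma fmapE U t j :
  fmap M theta U t j = fcell t (prevrow (fmap M theta U) t) j (U t j).
Proof.
rewrite prevrow_fmap /fcell mxE.
by case: t => [[|t] lt_t]; rewrite /= mxE (_ : inord _ = Ordinal lt_t) //;
  apply/val_inj/inordK.
Qed.

Lemma fcell_within_bounds X t j (u : R) :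
  (bounds M theta X t j).1 <= u < (bounds M theta X t j).2 ->
  X t j = fcell t (prevrow X t) j u.
Proof.
rewrite /bounds /fcell; case: eqP => _; last case: (prevrow X t 0 j);
  case: (X t j) => /andP[a_le_u u_lt_b] /=;
  by rewrite ?u_lt_b // ?(ltNge u) -?leNgt a_le_u.
Qed.

Lemma within_bounds_fcell X t j (u : R) :
  0 <= u < 1 -> X t j = fcell t (prevrow X t) j u ->
  (bounds M theta X t j).1 <= u < (bounds M theta X t j).2.
Proof.
rewrite /bounds => /andP[u_ge0 u_lt1] ->; rewrite /fcell.
case: eqP => _; last case: (prevrow X t 0 j).
- by case: ltP => /= u_p0; apply/andP.
- by case: ltP => /= u_p; apply/andP.
- by case: ltP => /= u_p; apply/andP.
Qed.

Lemma fcell_rec_unique X X' U :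
  (forall t j, X t j = fcell t (prevrow X t) j (U t j)) ->
  (forall t j, X' t j = fcell t (prevrow X' t) j (U t j)) -> X = X'.
Proof.
move=> recX recX'.
suff rowE t : (t < T.+1)%N -> row (inord t) X = row (inord t) X'.
  apply/matrixP => t j.
  by have /rowP/(_ j) := rowE t (ltn_ord t); rewrite !mxE inord_val.
elim: t => [|t IH] lt_t; apply/rowP => k; rewrite !mxE recX recX' /fcell.
  by rewrite inordK.
by rewrite /prevrow (inordK lt_t) /= IH // ltnW.
Qed.

Lemma fmap_within_bounds X U : within_bounds X U -> X = fmap M theta U.
Proof.
move=> XU; apply: (@fcell_rec_unique X _ U) => [t j|t j]; last exact: fmapE.
exact: fcell_within_bounds (XU t j).
Qed.

Lemma within_bounds_fmap U :
  (forall t j, 0 <= U t j < 1) -> within_bounds (fmap M theta U) U.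
Proof. by move=> U01 t j; apply: within_bounds_fcell (U01 t j) (fmapE U t j). Qed.

Lemma prior_prod_bounds X :
  prior M theta X =
  \prod_(t < T.+1) \prod_(j < N)
    ((bounds M theta X t j).2 - (bounds M theta X t j).1).
Proof.
apply: eq_bigr => t _; apply: eq_bigr => j _; rewrite /bounds /bern /pCU.
case: eqP => _; first by case: (X t j) => /=; ring.
by case: (prevrow X t 0 j); case: (X t j) => /=; ring.
Qed.

Lemma q1_gt0_within_bounds X U : 0 < q1 M theta U X -> within_bounds X U.
Proof.
move=> q1_gt0 t j; apply: contraTT q1_gt0 => out_tj.
by rewrite /q1 (bigD1 t) //= (bigD1 j) //= ifN // !mul0r ltxx.
Qed.

Lemma q1_within_bounds X U :
  within_bounds X U -> q1 M theta U X = (prior M theta X)^-1.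
Proof.
move=> XU; rewrite prior_prod_bounds -prodfV; apply: eq_bigr => t _.
by rewrite -prodfV; apply: eq_bigr => j _ /=; rewrite XU.
Qed.

(* Step 2 resamples a single coordinate, inside (0, 1). *)
Lemma q2_gt0_unit_interval U Us :
  (forall t j, 0 <= U t j < 1) -> 0 < q2 M theta Us U ->
  forall t j, 0 <= Us t j < 1.
Proof.
move=> U01 q2_gt0 t0 j0; apply: contraTT q2_gt0 => Us_out.
rewrite /q2 big1 ?ltxx // => t _; rewrite big1 // => j _.
case: ifP => // /and3P[/forallP same Us01 _]; exfalso; move: Us_out.
have [[<- <-] | ne] := eqVneq (t, j) (t0, j0).
  by case/andP: Us01 => /ltW -> ->.
have /forallP/(_ j0)/implyP := same t0; rewrite eq_sym ne => /(_ isT) /eqP ->.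
by rewrite U01.
Qed.

Lemma post_ratio tested Y X Xs :
  post M theta tested Y X != 0 ->
  post M theta tested Y Xs / post M theta tested Y X =
  lik M tested Y Xs * prior M theta Xs / (lik M tested Y X * prior M theta X).
Proof.
rewrite /post; set Z := \sum_(X' : 'M[bool]_(T.+1, N)) _ => post_neq0.
have Z_neq0 : Z != 0 by apply: contraNneq post_neq0 => ->; rewrite invr0 mulr0.
by rewrite invf_div mulrA divfK.
Qed.

Hypotheses (Delta_gt0 : 0 < Delta M) (gamma_gt0 : 0 < gamma M).
Hypotheses (p0_01 : 0 < p0 M < 1) (lam_gt0 : forall j t xp, 0 < lam M j t xp theta).

Lemma bounds_unit_interval X t j :
  0 <= (bounds M theta X t j).1 < (bounds M theta X t j).2 /\
  (bounds M theta X t j).2 <= 1.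
Proof.
have /andP[pCU_gt0 pCU_lt1] := onem_expRN_gt0_lt1 (mulr_gt0 gamma_gt0 Delta_gt0).
have /andP[pUC_gt0 pUC_lt1] :=
  onem_expRN_gt0_lt1 (mulr_gt0 (lam_gt0 j t (prevrow X t)) Delta_gt0).
case/andP: p0_01 => p0_gt0 p0_lt1.
rewrite /bounds /pCU /pUC; case: eqP => _; first by case: (X t j) => /=; lra.
by case: (prevrow X t 0 j); case: (X t j) => /=; lra.
Qed.

Lemma within_bounds_unit_interval X U :
  within_bounds X U -> forall t j, 0 <= U t j < 1.
Proof.
move=> XU t j; have /andP[a_le_u u_lt_b] := XU t j.
have [/andP[a_ge0 a_lt_b] b_le1] := bounds_unit_interval X t j.
by apply/andP; split; lra.
Qed.

Lemma prior_gt0 X : 0 < prior M theta X.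
Proof.
rewrite prior_prod_bounds; apply: prodr_gt0 => t _; apply: prodr_gt0 => j _.
by have [/andP[_ a_lt_b] _] := bounds_unit_interval X t j; rewrite subr_gt0.
Qed.

End Rippler.

Theorem proposition1 (R : realType) (Theta : Type) (T N : nat)
  (M : model R Theta T N) (theta : Theta)
  (tested : 'I_T.+1 -> 'I_N -> bool) (Y : 'M[bool]_(T.+1, N))
  (X Xs : 'M[bool]_(T.+1, N)) (U Us : 'M[R]_(T.+1, N)) :
  0 < Delta M -> 0 < gamma M -> 0 < p0 M < 1 ->
  (forall j t xp, 0 < lam M j t xp theta) ->
  0 <= se M <= 1 -> 0 <= sp M <= 1 ->
  0 < post M theta tested Y X ->
  0 < q1 M theta U X ->
  0 < q2 M theta Us U ->
  Xs = fmap M theta Us ->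
  Num.min 1
    (post M theta tested Y Xs / post M theta tested Y X *
     ((q1 M theta Us Xs * q2 M theta U Us * q3 M theta X U) /
      (q1 M theta U X * q2 M theta Us U * q3 M theta Xs Us)))
  = Num.min 1
    (lik M tested Y Xs / lik M tested Y X *
     (q2 M theta U Us / q2 M theta Us U)).
Proof.
move=> Delta_gt0 gamma_gt0 p0_01 lam_gt0 _ _ post_gt0 q1_gt0 q2_gt0 Xs_def.
have XU := q1_gt0_within_bounds q1_gt0.
have Us01 := q2_gt0_unit_interval
  (within_bounds_unit_interval Delta_gt0 gamma_gt0 p0_01 lam_gt0 XU) q2_gt0.
have XsUs : within_bounds M theta Xs Us by rewrite Xs_def; exact: within_bounds_fmap.
have lik_neq0 : lik M tested Y X != 0.
  by apply: contraTneq post_gt0; rewrite /post => ->; rewrite !mul0r ltxx.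
have prior_neq0 Z : prior M theta Z != 0 :=
  lt0r_neq0 (prior_gt0 Delta_gt0 gamma_gt0 p0_01 lam_gt0 Z).
rewrite post_ratio ?gt_eqF // (q1_within_bounds XU) (q1_within_bounds XsUs).
rewrite /q3 -(fmap_within_bounds XU) -Xs_def !eqxx; congr (Num.min 1 _).
by field; rewrite lik_neq0 !prior_neq0 gt_eqF.
Qed.
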